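(* Let $(X,d)$ be a metric space and let $F$ be a semiflow on $X$ with strong compact dynamics, with strong global attractor $\mathcal G$. If $x\in\mathcal G$, $y\in X$ and $x\succcurlyeq_{\mathcal S} y$, then $y\in\mathcal G$.
   Context: A semiflow on a metric space $(X,d)$ is a continuous map $F:[0,\infty)\times X\to X$, $(t,x)\mapsto F^t(x)$, with $F^0=\mathrm{id}$ and $F^{t+s}=F^t\circ F^s$. A curve is piecewise continuous if it is continuous except at finitely many points, at which one-sided limits exist. For $T\ge1$, a piecewise continuous curve $\gamma:[0,T]\to X$ is $\varepsilon$-close to $F$ if $d(\gamma(t+\tau),F^\tau(\gamma(t)))<\varepsilon$ for every $\tau\in[0,1]$ and $t\in[0,T-\tau]$. An $\varepsilon$-chain from $x$ to $y$ is a piecewise continuous $\gamma:[0,T]\to X$, $T\ge 1$, with $\gamma(0)=x$, $\gamma(T)=y$, $\gamma$ $\varepsilon$-close to $F$. Write $x\succcurlyeq_{\mathcal S} y$ if for every $\varepsilon>0$ there is an $\varepsilon$-chain from $x$ to $y$. For $G\subset X$, $N_\varepsilon(G)=\{y: d(y,G)<\varepsilon\}$ and $W_\varepsilon(G)=\bigcup_{t\ge0}F^t(N_\varepsilon(G))$. A set $G$ attracts $K$ if for every $\varepsilon>0$ there is $T>0$ with $F^t(K)\subset N_\varepsilon(G)$ for all $t\ge T$. The global attractor $\mathcal G$ of $F$, if it exists, is a maximal invariant compact subset of $X$ attracting every compact $K\subset X$. It is strong if there is $\varepsilon>0$ such that $\mathcal G$ attracts $N_\varepsilon(\mathcal G)$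 and the map $(t,z)\mapsto F^t(z)$ is uniformly continuous on $[0,1]\times W_\varepsilon(\mathcal G)$. $F$ has strong compact dynamics if it has a strong global attractor. *)

From Stdlib Require Import Reals List.
Open Scope R_scope.

Section Defs.
Context {X : Type} (d : X -> X -> R).

Record metric_space : Prop := {
  d_nonneg : forall x y, 0 <= d x y;
  d_self : forall x, d x x = 0;
  d_eq : forall x y, d x y = 0 -> x = y;
  d_sym : forall x y, d x y = d y x;
  d_tri : forall x y z, d x z <= d x y + d y z }.

Definition open_set (U : X -> Prop) : Prop :=
  forall x, U x -> exists r, 0 < r /\ forall y, d x y < r -> U y.

Definition compact_set (K : X -> Prop) : Prop :=
  forall (I : Type) (U : I -> X -> Prop),
    (forall i, open_set (U i)) ->
    (forall x, K x -> exists i, U i x) ->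
    exists l : list I, forall x, K x -> exists i, In i l /\ U i x.

(* semiflow: F t x for t >= 0 (values at t < 0 are irrelevant) *)
Record semiflow (F : R -> X -> X) : Prop := {
  sf_cont : forall t x eps, 0 <= t -> 0 < eps ->
     exists delta, 0 < delta /\ forall s y, 0 <= s -> Rabs (s - t) < delta ->
       d x y < delta -> d (F s y) (F t x) < eps;
  sf_zero : forall x, F 0 x = x;
  sf_comp : forall t s x, 0 <= t -> 0 <= s -> F (t + s) x = F t (F s x) }.

Definition cont_at_within (gamma : R -> X) (T t : R) : Prop :=
  forall eps, 0 < eps -> exists delta, 0 < delta /\
    forall s, 0 <= s <= T -> Rabs (s - t) < delta -> d (gamma s) (gamma t) < eps.

Definition left_limit_exists (gamma : R -> X) (T p : R) : Prop :=
  exists L, forall eps, 0 < eps -> exists delta, 0 < delta /\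
    forall s, 0 <= s <= T -> p - delta < s < p -> d (gamma s) L < eps.

Definition right_limit_exists (gamma : R -> X) (T p : R) : Prop :=
  exists L, forall eps, 0 < eps -> exists delta, 0 < delta /\
    forall s, 0 <= s <= T -> p < s < p + delta -> d (gamma s) L < eps.

Definition piecewise_continuous (gamma : R -> X) (T : R) : Prop :=
  exists pts : list R,
    (forall t, 0 <= t <= T -> ~ In t pts -> cont_at_within gamma T t) /\
    (forall p, In p pts -> 0 <= p <= T ->
        (0 < p -> left_limit_exists gamma T p) /\
        (p < T -> right_limit_exists gamma T p)).

Definition eps_close (F : R -> X -> X) (eps : R) (gamma : R -> X) (T : R) : Prop :=
  forall tau t, 0 <= tau <= 1 -> 0 <= t <= T - tau ->
    d (gamma (t + tau)) (F tau (gamma t)) < eps.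

Definition eps_chain (F : R -> X -> X) (eps : R) (x y : X) : Prop :=
  exists (T : R) (gamma : R -> X), 1 <= T /\ piecewise_continuous gamma T /\
    gamma 0 = x /\ gamma T = y /\ eps_close F eps gamma T.

Definition chain_succ (F : R -> X -> X) (x y : X) : Prop :=
  forall eps, 0 < eps -> eps_chain F eps x y.

Definition nbhd (eps : R) (G : X -> Prop) : X -> Prop :=
  fun y => exists g, G g /\ d y g < eps.

Definition W (F : R -> X -> X) (eps : R) (G : X -> Prop) : X -> Prop :=
  fun z => exists t y, 0 <= t /\ nbhd eps G y /\ z = F t y.

Definition attracts (F : R -> X -> X) (G K : X -> Prop) : Prop :=
  forall eps, 0 < eps -> exists T, 0 < T /\
    forall t x, T <= t -> K x -> nbhd eps G (F t x).

Definition invariant (F : R -> X -> X) (G : X -> Prop) : Prop :=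
  forall t, 0 <= t -> forall y, G y <-> exists x, G x /\ y = F t x.

Definition global_attractor (F : R -> X -> X) (G : X -> Prop) : Prop :=
  invariant F G /\ compact_set G /\
  (forall K, invariant F K -> compact_set K -> forall x, K x -> G x) /\
  (forall K, compact_set K -> attracts F G K).

Definition strong_global_attractor (F : R -> X -> X) (G : X -> Prop) : Prop :=
  global_attractor F G /\
  exists eps, 0 < eps /\ attracts F G (nbhd eps G) /\
    (forall eta, 0 < eta -> exists delta, 0 < delta /\
       forall t s z w, 0 <= t <= 1 -> 0 <= s <= 1 -> W F eps G z -> W F eps G w ->
         Rabs (t - s) < delta -> d z w < delta -> d (F t z) (F s w) < eta).

End Defs.

(* Sampling an [eps]-chain from [x] at unit time steps yields a pseudo-orbit of the
   time-one map [F 1] starting (after one step back along the invariant set [G]) in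
   [G].  Fix [rho] and a time [n] after which [N_e0(G)] is drawn into [N_(rho/2)(G)].
   Uniform continuity of [F 1] on [W_e0(G)] lets pseudo-orbits of length [n] shadow
   true orbits within [rho/2]; so, by strong induction, every point of the
   pseudo-orbit lies in [N_rho(G)]: the first [n] points shadow the orbit of a point
   of [G], and any later point shadows the [n]-step image of an earlier one, which the
   attraction puts in [N_(rho/2)(G)].  Hence [y] is arbitrarily close to the compact,
   hence closed, set [G]. *)
From Stdlib Require Import Reals Lra Lia Classical List ZArith.
Open Scope R_scope.

Lemma nbhd_mono (X : Type) (d : X -> X -> R) (G : X -> Prop) (r r' : R) (z : X) :
  r <= r' -> nbhd d r G z -> nbhd d r' G z.
Proof. intros Hr [g [Gg Hg]]. exists g. split; [exact Gg | lra]. Qed.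

Lemma real_split_nat_unit (T : R) :
  0 <= T -> exists (M : nat) (r : R), 0 <= r <= 1 /\ T = r + INR M.
Proof.
  intros HT. destruct (archimed T) as [Hup Hup'].
  assert (Hpos : (0 <= up T - 1)%Z).
  { assert (0 < up T)%Z by (apply lt_IZR; lra). lia. }
  exists (Z.to_nat (up T - 1)), (T - IZR (up T - 1)).
  rewrite INR_IZR_INZ, Z2Nat.id by exact Hpos. rewrite minus_IZR. split; lra.
Qed.

Lemma nat_pos_ge (r : R) : exists n : nat, (0 < n)%nat /\ r <= INR n.
Proof.
  destruct (real_split_nat_unit (Rmax r 0) (Rmax_r r 0)) as [M [s [Hs HM]]].
  exists (S M). split; [lia |]. rewrite S_INR. pose proof (Rmax_l r 0). lra.
Qed.

Lemma list_pos_lower_bound (A : Type) (P : A -> Prop) (f : A -> R) (l : list A) :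
  (forall a, P a -> 0 < f a) -> exists r, 0 < r /\ forall a, In a l -> P a -> r <= f a.
Proof.
  intros Hf. induction l as [|a l [r [Hr Hl]]].
  - exists 1. split; [lra | intros a []].
  - destruct (classic (P a)) as [Pa | nPa].
    + exists (Rmin r (f a)). split; [apply Rmin_pos; auto |].
      intros b [<- | Hb] Pb; [apply Rmin_r |].
      pose proof (Rmin_l r (f a)). specialize (Hl b Hb Pb). lra.
    + exists r. split; [exact Hr |]. intros b [<- | Hb] Pb; [contradiction | auto].
Qed.

Lemma compact_set_closed (X : Type) (d : X -> X -> R) (K : X -> Prop) (y : X) :
  metric_space d -> compact_set d K -> (forall r, 0 < r -> nbhd d r K y) -> K y.
Proof.
  intros hm hc Hy. apply NNPP. intros nKy.
  assert (Hsep : forall g, K g -> 0 < d y g / 2).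
  { intros g Kg. pose proof (d_nonneg _ hm y g).
    destruct (Req_dec (d y g) 0) as [E | E]; [| lra].
    apply (d_eq _ hm) in E. subst. contradiction. }
  (* cover [K] by the balls [B(g, d(y,g)/2)], none of which contains [y] *)
  destruct (hc X (fun g z => K g /\ d z g < d y g / 2)) as [l Hl].
  - intros g z [Kg Hz]. exists (d y g / 2 - d z g). split; [lra |].
    intros w Hw. split; [exact Kg |].
    pose proof (d_tri _ hm w z g). rewrite (d_sym _ hm w z) in *. lra.
  - intros g Kg. exists g. split; [exact Kg |]. rewrite (d_self _ hm). auto.
  - destruct (list_pos_lower_bound X K (fun g => d y g / 2) l Hsep) as [r [Hr Hrl]].
    destruct (Hy r Hr) as [g [Kg Hyg]].
    destruct (Hl g Kg) as [c [Hc [Kc Hgc]]].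
    specialize (Hrl c Hc Kc). pose proof (d_tri _ hm y g c). lra.
Qed.

Section Shadowing.
Variables (X : Type) (d : X -> X -> R) (f : X -> X) (U : X -> Prop).
Hypothesis hm : metric_space d.
Hypothesis U_forward : forall z, U z -> U (f z).
Hypothesis f_unif_on_U : forall eta, 0 < eta -> exists delta, 0 < delta /\
  forall z w, U z -> U w -> d z w < delta -> d (f z) (f w) < eta.

Lemma iter_forward (n : nat) (z : X) : U z -> U (Nat.iter n f z).
Proof. intros Uz. induction n as [|n IH]; simpl; auto. Qed.

Lemma pseudo_orbit_shadowing (N : nat) (eta : R) : 0 < eta -> exists delta, 0 < delta /\
  forall (a : nat -> X) (m : nat), (m <= N)%nat ->
    (forall k, (k < m)%nat -> U (a k)) ->
    (forall k, (k < m)%nat -> d (a (S k)) (f (a k)) < delta) ->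
    d (a m) (Nat.iter m f (a 0%nat)) < eta.
Proof.
  revert eta. induction N as [|N IH]; intros eta Heta.
  - exists 1. split; [lra |]. intros a m Hm _ _.
    replace m with 0%nat by lia. simpl. rewrite (d_self _ hm). exact Heta.
  - destruct (f_unif_on_U (eta / 2)) as [d1 [Hd1 Hf]]; [lra |].
    destruct (IH (Rmin d1 (eta / 2))) as [d2 [Hd2 Hsh]]; [apply Rmin_pos; lra |].
    exists (Rmin d2 (eta / 2)). split; [apply Rmin_pos; lra |].
    intros a m Hm HU Hstep.
    pose proof (Rmin_l d1 (eta / 2)). pose proof (Rmin_r d1 (eta / 2)).
    pose proof (Rmin_l d2 (eta / 2)). pose proof (Rmin_r d2 (eta / 2)).
    assert (Hprefix : forall m', (m' <= N)%nat -> (m' <= m)%nat ->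
              d (a m') (Nat.iter m' f (a 0%nat)) < Rmin d1 (eta / 2)).
    { intros m' Hm'N Hm'm. apply Hsh; [exact Hm'N | |]; intros k Hk.
      - apply HU. lia.
      - specialize (Hstep k ltac:(lia)). lra. }
    destruct (Nat.eq_dec m (S N)) as [-> | Hne].
    + assert (Hlast : d (f (a N)) (f (Nat.iter N f (a 0%nat))) < eta / 2).
      { apply Hf; [apply HU; lia | apply iter_forward, HU; lia |].
        specialize (Hprefix N ltac:(lia) ltac:(lia)). lra. }
      specialize (Hstep N ltac:(lia)).
      pose proof (d_tri _ hm (a (S N)) (f (a N)) (f (Nat.iter N f (a 0%nat)))).
      simpl. lra.
    + specialize (Hprefix m ltac:(lia) ltac:(lia)). lra.
Qed.

End Shadowing.

Lemma semiflow_nat_iter (X : Type) (d : X -> X -> R) (F : R -> X -> X) (n : nat) (z : X) :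
  semiflow d F -> F (INR n) z = Nat.iter n (F 1) z.
Proof.
  intros hs. induction n as [|n IH]; [apply (sf_zero _ _ hs) |].
  change (Nat.iter (S n) (F 1) z) with (F 1 (Nat.iter n (F 1) z)).
  rewrite <- IH, S_INR, Rplus_comm. apply (sf_comp _ _ hs); [lra | apply pos_INR].
Qed.

Lemma invariant_forward (X : Type) (F : R -> X -> X) (G : X -> Prop)
  (t : R) (z : X) :
  invariant F G -> 0 <= t -> G z -> G (F t z).
Proof. intros Hinv Ht Gz. apply (Hinv t Ht). exists z. auto. Qed.

Lemma chain_time_one_samples (X : Type) (d : X -> X -> R) (F : R -> X -> X)
  (G : X -> Prop) (delta T : R) (gam : R -> X) :
  invariant F G -> G (gam 0) -> 1 <= T -> eps_close d F delta gam T ->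
  exists (b : nat -> X) (M : nat), G (b 0%nat) /\
    (forall k, (k < M)%nat -> d (b (S k)) (F 1 (b k)) < delta) /\ b M = gam T.
Proof.
  intros Hinv G0 HT Hclose.
  destruct (real_split_nat_unit T ltac:(lra)) as [M [r [Hr ->]]].
  (* [F r (gam 0) = F 1 g] for some [g] in [G], which then starts the pseudo-orbit *)
  destruct (proj1 (Hinv 1 ltac:(lra) (F r (gam 0))) (invariant_forward _ F G r _ Hinv
    (proj1 Hr) G0)) as [g [Gg Hg]].
  exists (fun k => match k with O => g | S i => gam (r + INR i) end), (S M).
  split; [exact Gg |]. split; [| reflexivity].
  intros [|i] Hi; pose proof (pos_INR M).
  - rewrite <- Hg. replace (r + INR 0) with (0 + r) by (simpl; lra).
    apply Hclose; lra.
  - rewrite S_INR. replace (r + (INR i + 1)) with (r + INR i + 1) by lra.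
    assert (Hle : INR (S i) <= INR M) by (apply le_INR; lia).
    rewrite S_INR in Hle. pose proof (pos_INR i). apply Hclose; lra.
Qed.

Section StrongAttractor.
Variables (X : Type) (d : X -> X -> R) (F : R -> X -> X) (G : X -> Prop) (e0 : R).
Hypothesis hm : metric_space d.
Hypothesis hs : semiflow d F.
Hypothesis G_invariant : invariant F G.
Hypothesis G_attracts : attracts d F G (nbhd d e0 G).
Hypothesis F_unif_on_W : forall eta, 0 < eta -> exists delta, 0 < delta /\
  forall t s z w, 0 <= t <= 1 -> 0 <= s <= 1 -> W d F e0 G z -> W d F e0 G w ->
    Rabs (t - s) < delta -> d z w < delta -> d (F t z) (F s w) < eta.

Lemma nbhd_sub_W (z : X) : nbhd d e0 G z -> W d F e0 G z.
Proof. intros Hz. exists 0, z. repeat split; [lra | exact Hz | now rewrite (sf_zero _ _ hs)]. Qed.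

Lemma W_forward (t : R) (z : X) : 0 <= t -> W d F e0 G z -> W d F e0 G (F t z).
Proof.
  intros Ht [s [w [Hs [Hw ->]]]]. exists (t + s), w.
  repeat split; [lra | exact Hw | symmetry; apply (sf_comp _ _ hs); lra].
Qed.

Lemma time_one_unif_on_W (eta : R) : 0 < eta -> exists delta, 0 < delta /\
  forall z w, W d F e0 G z -> W d F e0 G w -> d z w < delta -> d (F 1 z) (F 1 w) < eta.
Proof.
  intros Heta. destruct (F_unif_on_W eta Heta) as [delta [Hdelta Hu]].
  exists delta. split; [exact Hdelta |]. intros z w Hz Hw Hzw.
  apply Hu; auto; [lra | lra | rewrite Rminus_diag, Rabs_R0; exact Hdelta].
Qed.

Lemma pseudo_orbit_near_attractor (rho : R) : 0 < rho <= e0 -> exists delta, 0 < delta /\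
  forall (b : nat -> X) (M : nat), G (b 0%nat) ->
    (forall k, (k < M)%nat -> d (b (S k)) (F 1 (b k)) < delta) ->
    forall j, (j <= M)%nat -> nbhd d rho G (b j).
Proof.
  intros [Hrho Hrho_e0].
  destruct (G_attracts (rho / 2)) as [Ta [_ Hattr]]; [lra |].
  destruct (nat_pos_ge Ta) as [n [Hn_pos Hn]].
  destruct (pseudo_orbit_shadowing X d (F 1) (W d F e0 G) hm (fun z => W_forward 1 z Rle_0_1)
              time_one_unif_on_W n (rho / 2)) as [delta [Hdelta Hsh]]; [lra |].
  exists delta. split; [exact Hdelta |].
  intros b M Gb0 Hstep j. induction j as [j IH] using lt_wf_ind. intros Hj.
  assert (HW : forall k, (k < j)%nat -> W d F e0 G (b k)).
  { intros k Hk. apply nbhd_sub_W, nbhd_mono with rho; [exact Hrho_e0 | apply IH; lia]. }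
  destruct (le_lt_dec j n) as [Hjn | Hnj].
  - (* [b j] shadows the true orbit of [b 0], which stays in [G] *)
    exists (Nat.iter j (F 1) (b 0%nat)). split.
    + rewrite <- (semiflow_nat_iter X d F j _ hs).
      apply (invariant_forward X); [exact G_invariant | apply pos_INR | exact Gb0].
    + assert (d (b j) (Nat.iter j (F 1) (b 0%nat)) < rho / 2).
      { apply (Hsh b j Hjn); intros k Hk; [apply HW | apply Hstep]; lia. }
      lra.
  - (* [b j] shadows the [n]-step image of [b (j - n)], which attraction brings near [G] *)
    assert (Hshadow : d (b j) (Nat.iter n (F 1) (b (j - n)%nat)) < rho / 2).
    { replace j with (j - n + n)%nat at 1 by lia.
      rewrite <- (Nat.add_0_r (j - n)) at 2.
      apply (Hsh (fun k => b (j - n + k)%nat) n (le_n n)); intros k Hk.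
      - apply HW. lia.
      - replace (j - n + S k)%nat with (S (j - n + k)) by lia. apply Hstep. lia. }
    destruct (Hattr (INR n) (b (j - n)%nat) Hn) as [g [Gg Hg]].
    { apply nbhd_mono with rho; [exact Hrho_e0 | apply IH; lia]. }
    rewrite (semiflow_nat_iter X d F n _ hs) in Hg.
    exists g. split; [exact Gg |].
    pose proof (d_tri _ hm (b j) (Nat.iter n (F 1) (b (j - n)%nat)) g). lra.
Qed.

End StrongAttractor.

Theorem proposition3p1 (X : Type) (d : X -> X -> R) (F : R -> X -> X) (G : X -> Prop)
  (x y : X) :
  metric_space d -> semiflow d F -> strong_global_attractor d F G ->
  G x -> chain_succ d F x y -> G y.
Proof.
  intros hm hs [[Hinv [Hcomp _]] [e0 [He0 [Hatt Hunif]]]] Gx Hxy.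
  apply (compact_set_closed X d G y hm Hcomp). intros r Hr.
  apply nbhd_mono with (Rmin r e0); [apply Rmin_l |].
  destruct (pseudo_orbit_near_attractor X d F G e0 hm hs Hinv Hatt Hunif (Rmin r e0))
    as [delta [Hdelta Hnear]]; [split; [apply Rmin_pos | apply Rmin_r]; lra |].
  destruct (Hxy delta Hdelta) as [T [gam [HT [_ [Hx [Hy Hclose]]]]]].
  subst x y.
  destruct (chain_time_one_samples X d F G delta T gam Hinv Gx HT Hclose)
    as [b [M [Gb0 [Hstep <-]]]].
  exact (Hnear b M Gb0 Hstep M (le_n M)).
Qed.
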